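(* Let $X$ be a geodesic metric space and let $\ell_1,\ell_2$ be two $N$-Morse geodesics in $X$ with $\ell_1(0)=\ell_2(0)=e$. Suppose there exists some $t_0$ such that $d(\ell_1(t),\ell_2(t))>4N(3,0)$ for all $t\ge t_0$, and fix such a $t_0$ with $d(\ell_1(t_0),\ell_2(t_0))\le 6N(3,0)$. Let $t_1,t_2\ge t_0$ (in the domains of $\ell_1,\ell_2$ respectively), and set $x_i=\ell_i(t_0)$, $y_i=\ell_i(t_i)$. Let $P$ be the path obtained by following $\ell_1$ from $y_1$ to $x_1$, then any geodesic from $x_1$ to $x_2$, then $\ell_2$ from $x_2$ to $y_2$. Then $P$ is a $(1,12N(3,0))$-quasi-geodesic. In particular \[d(y_1,y_2)\ge d(y_1,x_1)+d(x_1,x_2)+d(x_2,y_2)-12N(3,0).\]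
   Context: A Morse gauge is a function $N$ assigning to each $(K,C)$ ($K\ge1,C\ge0$) a number $N(K,C)\ge0$; a geodesic $\gamma$ is $N$-Morse if every $(K,C)$-quasi-geodesic with endpoints on $\gamma$ lies in the $N(K,C)$-neighbourhood of $\gamma$. A $(K,C)$-quasi-geodesic is a path $f$ with $K^{-1}|s-t|-C\le d(f(s),f(t))\le K|s-t|+C$. *)

From Stdlib Require Import Reals.
Open Scope R_scope.

Record MetricSpace := {
  pt :> Type;
  mdist : pt -> pt -> R;
  mdist_nonneg : forall x y, 0 <= mdist x y;
  mdist_eq0 : forall x y, mdist x y = 0 <-> x = y;
  mdist_sym : forall x y, mdist x y = mdist y x;
  mdist_tri : forall x y z, mdist x z <= mdist x y + mdist y z
}.

Arguments mdist {m} _ _.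

Definition cont_on {X : MetricSpace} (I : R -> Prop) (f : R -> X) : Prop :=
  forall s, I s -> forall eps, 0 < eps -> exists delta, 0 < delta /\
    forall t, I t -> Rabs (t - s) < delta -> mdist (f s) (f t) < eps.

Definition is_interval (D : R -> Prop) : Prop :=
  forall s t u, D s -> D u -> s <= t <= u -> D t.

Definition geodesic {X : MetricSpace} (D : R -> Prop) (gamma : R -> X) : Prop :=
  is_interval D /\ (exists s, D s) /\
  forall s t, D s -> D t -> mdist (gamma s) (gamma t) = Rabs (s - t).

Definition quasi_geodesic {X : MetricSpace} (K C a b : R) (f : R -> X) : Prop :=
  a <= b /\ cont_on (fun s => a <= s <= b) f /\
  forall s t, a <= s <= b -> a <= t <= b ->
    / K * Rabs (s - t) - C <= mdist (f s) (f t) <= K * Rabs (s - t) + C.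

Definition geodesic_space (X : MetricSpace) : Prop :=
  forall x y : X, exists g : R -> X,
    geodesic (fun s => 0 <= s <= mdist x y) g /\ g 0 = x /\ g (mdist x y) = y.

Definition morse_gauge (N : R -> R -> R) : Prop :=
  forall K C, 1 <= K -> 0 <= C -> 0 <= N K C.

Definition morse {X : MetricSpace} (N : R -> R -> R) (D : R -> Prop) (gamma : R -> X) : Prop :=
  geodesic D gamma /\
  forall K C a b (q : R -> X), 1 <= K -> 0 <= C ->
    quasi_geodesic K C a b q ->
    (exists u, D u /\ q a = gamma u) ->
    (exists u, D u /\ q b = gamma u) ->
    forall s, a <= s <= b -> exists u, D u /\ mdist (q s) (gamma u) <= N K C.

(* The concatenated path P: l1 from y1 = l1(t1) back to x1 = l1(t0) (parameters
   s in [0, t1-t0]), then g from x1 to x2 (g defined on [0,L], L = d(x1,x2)),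
   then l2 from x2 = l2(t0) to y2 = l2(t2). *)
Definition concat_path {X : MetricSpace} (l1 g l2 : R -> X) (t0 t1 L : R) (s : R) : X :=
  if Rle_dec s (t1 - t0) then l1 (t1 - s)
  else if Rle_dec s (t1 - t0 + L) then g (s - (t1 - t0))
  else l2 (t0 + (s - (t1 - t0) - L)).

(* Let n = N(3,0). The closest-point projection of e onto a geodesic [y1,y2] with
   y1 on l1 and y2 on l2 lies n-close to both l1 and l2, because a geodesic to the
   projection followed by the remaining part of [y1,y2] is a (3,0)-quasi-geodesic
   with endpoints on l_i. Since l1 and l2 are more than 4n apart beyond t0, the two
   shadows of the projection cannot both lie beyond t0, which yields the divergence
   estimate d(l1 a, l2 b) > a + b - 2 t0 - 4n. Along the path P, two points on the
   same piece are at exact distance, two points on adjacent pieces lose at most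
   twice the middle length d(x1,x2) <= 6n, and two points on the outer pieces lose
   at most d(x1,x2) + 4n by the divergence estimate. *)
From Stdlib Require Import Reals Lra Psatz.
Open Scope R_scope.

Definition isometric_on {X : MetricSpace} (a b : R) (f : R -> X) : Prop :=
  forall s t, a <= s -> s <= t -> t <= b -> mdist (f s) (f t) = t - s.

Definition lipschitz1_on {X : MetricSpace} (a b : R) (f : R -> X) : Prop :=
  forall s t, a <= s -> s <= t -> t <= b -> mdist (f s) (f t) <= t - s.

Definition closest_on {X : MetricSpace} (a b : R) (f : R -> X) (x : X) (r : R) : Prop :=
  a <= r <= b /\ forall t, a <= t <= b -> mdist x (f r) <= mdist x (f t).

Lemma geodesic_dist {X : MetricSpace} (D : R -> Prop) (gamma : R -> X) s t :
  geodesic D gamma -> D s -> D t -> mdist (gamma s) (gamma t) = Rabs (s - t).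
Proof. intros [_ [_ G]]; exact (G s t). Qed.

Lemma geodesic_domain_between {X : MetricSpace} (D : R -> Prop) (gamma : R -> X) a b t :
  geodesic D gamma -> D a -> D b -> a <= t <= b -> D t.
Proof. intros [I _] Da Db Ht; exact (I a t b Da Db Ht). Qed.

Lemma geodesic_isometric_on {X : MetricSpace} (D : R -> Prop) (gamma : R -> X) a b :
  geodesic D gamma -> D a -> D b -> isometric_on a b gamma.
Proof.
  intros Gg Da Db s t Has Hst Htb.
  rewrite (geodesic_dist D) by (auto; apply (geodesic_domain_between D gamma a b); auto; lra).
  split_Rabs; lra.
Qed.

Lemma isometric_on_lipschitz1 {X : MetricSpace} a b (f : R -> X) :
  isometric_on a b f -> lipschitz1_on a b f.
Proof. intros H s t Has Hst Htb; rewrite H by assumption; lra. Qed.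

Lemma isometric_on_reverse {X : MetricSpace} d (f : R -> X) :
  isometric_on 0 d f -> isometric_on 0 d (fun s => f (d - s)).
Proof. intros H s t Hs Hst Ht; rewrite mdist_sym, H by lra; ring. Qed.

Lemma closest_on_reverse {X : MetricSpace} d (f : R -> X) x r :
  closest_on 0 d f x r -> closest_on 0 d (fun s => f (d - s)) x (d - r).
Proof.
  intros [Hr Hmin]; split; [lra|].
  intros t Ht; replace (d - (d - r)) with r by ring; apply Hmin; lra.
Qed.

Lemma lipschitz1_on_abs {X : MetricSpace} a b (f : R -> X) s t :
  lipschitz1_on a b f -> a <= s <= b -> a <= t <= b -> mdist (f s) (f t) <= Rabs (s - t).
Proof.
  intros H Hs Ht; destruct (Rle_dec s t).
  - specialize (H s t ltac:(lra) ltac:(lra) ltac:(lra)); split_Rabs; lra.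
  - rewrite mdist_sym; specialize (H t s ltac:(lra) ltac:(lra) ltac:(lra)); split_Rabs; lra.
Qed.

Lemma lipschitz1_cont_on {X : MetricSpace} a b (f : R -> X) :
  lipschitz1_on a b f -> cont_on (fun s => a <= s <= b) f.
Proof.
  intros H s Hs eps Heps; exists eps; split; [exact Heps|].
  intros t Ht Hst; rewrite Rabs_minus_sym in Hst.
  pose proof (lipschitz1_on_abs a b f s t H Hs Ht); lra.
Qed.

Lemma lipschitz1_on_glue {X : MetricSpace} a b c (f : R -> X) :
  lipschitz1_on a b f -> lipschitz1_on b c f -> lipschitz1_on a c f.
Proof.
  intros Hab Hbc s t Has Hst Htc.
  destruct (Rle_dec t b); [apply Hab; lra|].
  destruct (Rle_dec b s); [apply Hbc; lra|].
  pose proof (mdist_tri _ (f s) (f b) (f t)).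
  specialize (Hab s b ltac:(lra) ltac:(lra) ltac:(lra)).
  specialize (Hbc b t ltac:(lra) ltac:(lra) ltac:(lra)); lra.
Qed.

Lemma isometric_on_glue_lower {X : MetricSpace} a b c (f : R -> X) s t :
  isometric_on a b f -> isometric_on b c f ->
  a <= s -> s <= b -> b <= t -> t <= c ->
  t - s - 2 * Rmin (b - s) (t - b) <= mdist (f s) (f t).
Proof.
  intros Hab Hbc Has Hsb Hbt Htc.
  pose proof (mdist_tri _ (f s) (f t) (f b)).
  pose proof (mdist_tri _ (f b) (f s) (f t)).
  rewrite (mdist_sym _ (f t) (f b)), (mdist_sym _ (f b) (f s)) in *.
  rewrite (Hab s b), (Hbc b t) in * by lra.
  unfold Rmin; destruct Rle_dec; lra.
Qed.

Lemma quasi_geodesic1_endpoints {X : MetricSpace} C a b (f : R -> X) :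
  quasi_geodesic 1 C a b f -> b - a - C <= mdist (f a) (f b).
Proof.
  intros [Hab [_ Hdist]]; destruct (Hdist a b) as [Hlow _]; [lra | lra |].
  rewrite Rinv_1, Rmult_1_l, Rabs_minus_sym, Rabs_right in Hlow by lra; exact Hlow.
Qed.

Lemma quasi_geodesic_of_lipschitz1 {X : MetricSpace} K C a b (f : R -> X) :
  1 <= K -> 0 <= C -> a <= b -> lipschitz1_on a b f ->
  (forall s t, a <= s -> s <= t -> t <= b -> / K * (t - s) - C <= mdist (f s) (f t)) ->
  quasi_geodesic K C a b f.
Proof.
  intros HK HC Hab Hlip Hlow; split; [exact Hab|]; split.
  - exact (lipschitz1_cont_on a b f Hlip).
  - intros s t Hs Ht; pose proof (lipschitz1_on_abs a b f s t Hlip Hs Ht).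
    assert (Rabs (s - t) <= K * Rabs (s - t)) by (pose proof (Rabs_pos (s - t)); nra).
    split; [|lra].
    destruct (Rle_dec s t).
    + rewrite Rabs_minus_sym, Rabs_right by lra; apply Hlow; lra.
    + rewrite mdist_sym, Rabs_right by lra; apply Hlow; lra.
Qed.

(* Clamping to [a,b] makes the distance function continuous on all of R, as the
   extreme value theorem of the standard library requires. *)
Definition clamp (a b s : R) : R := Rmax a (Rmin b s).

Lemma clamp_range a b s : a <= b -> a <= clamp a b s <= b.
Proof. unfold clamp, Rmax, Rmin; repeat destruct Rle_dec; lra. Qed.

Lemma clamp_id a b s : a <= s <= b -> clamp a b s = s.
Proof. unfold clamp, Rmax, Rmin; repeat destruct Rle_dec; lra. Qed.

Lemma clamp_contract a b s t : Rabs (clamp a b s - clamp a b t) <= Rabs (s - t).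
Proof. unfold clamp, Rmax, Rmin; repeat destruct Rle_dec; split_Rabs; lra. Qed.

Lemma exists_closest_point {X : MetricSpace} a b (f : R -> X) x :
  a <= b -> lipschitz1_on a b f -> exists r, closest_on a b f x r.
Proof.
  intros Hab Hlip.
  set (F := fun s => mdist x (f (clamp a b s))).
  assert (HF : forall s t, Rabs (F s - F t) <= Rabs (s - t)).
  { intros s t; unfold F.
    pose proof (lipschitz1_on_abs a b f _ _ Hlip (clamp_range a b s Hab) (clamp_range a b t Hab)).
    pose proof (clamp_contract a b s t).
    pose proof (mdist_tri _ x (f (clamp a b s)) (f (clamp a b t))).
    pose proof (mdist_tri _ x (f (clamp a b t)) (f (clamp a b s))).
    rewrite (mdist_sym _ (f (clamp a b t))) in *.
    split_Rabs; lra. }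
  destruct (continuity_ab_min F a b Hab) as [r [Hmin Hr]].
  { intros c _ eps Heps; exists eps; split; [exact Heps|].
    intros y [_ Hy]; cbn in *; unfold R_dist in *; pose proof (HF y c); lra. }
  exists r; split; [exact Hr|].
  intros t Ht; specialize (Hmin t Ht); unfold F in Hmin.
  rewrite !clamp_id in Hmin by lra; exact Hmin.
Qed.

Definition join_path {X : MetricSpace} (f h : R -> X) (a c s : R) : X :=
  if Rle_dec s a then f s else h (c + (s - a)).

Lemma join_path_left {X : MetricSpace} (f h : R -> X) a c s :
  s <= a -> join_path f h a c s = f s.
Proof. intros Hs; unfold join_path; destruct Rle_dec; [reflexivity | lra]. Qed.

Lemma join_path_right {X : MetricSpace} (f h : R -> X) a c s :
  f a = h c -> a <= s -> join_path f h a c s = h (c + (s - a)).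
Proof.
  intros Hfh Hs; unfold join_path; destruct Rle_dec; [|reflexivity].
  replace s with a by lra; rewrite Hfh; f_equal; ring.
Qed.

(* In the crossing case the lower bound comes from d(x, q) >= d(x, sig r) for every
   q on sig. *)
Lemma closest_point_detour_quasi_geodesic {X : MetricSpace} (sig rho : R -> X) d r x :
  isometric_on 0 d sig -> closest_on 0 d sig x r ->
  isometric_on 0 (mdist x (sig r)) rho -> rho 0 = x -> rho (mdist x (sig r)) = sig r ->
  quasi_geodesic 3 0 0 (mdist x (sig r) + (d - r)) (join_path rho sig (mdist x (sig r)) r).
Proof.
  intros Hsig [Hr Hmin] Hrho rho0 rhoh.
  set (h := mdist x (sig r)) in *.
  assert (Hh : 0 <= h) by apply mdist_nonneg.
  set (P := join_path rho sig h r).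
  assert (Pleft : isometric_on 0 h P).
  { intros s t Hs Hst Ht; unfold P; rewrite !join_path_left by lra; auto. }
  assert (Pright : isometric_on h (h + (d - r)) P).
  { intros s t Hs Hst Ht; unfold P; rewrite !join_path_right by (auto; lra).
    rewrite Hsig by lra; ring. }
  apply quasi_geodesic_of_lipschitz1; [lra | lra | lra | |].
  { apply (lipschitz1_on_glue _ h); apply isometric_on_lipschitz1; assumption. }
  intros s t Hs Hst Ht.
  destruct (Rle_dec t h); [rewrite Pleft by lra; lra|].
  destruct (Rle_dec h s); [rewrite Pright by lra; lra|].
  unfold P; rewrite join_path_left, join_path_right by (auto; lra).
  set (q := sig (r + (t - h))).
  pose proof (Hmin (r + (t - h)) ltac:(lra)) as Hxq.
  pose proof (Hrho 0 s ltac:(lra) ltac:(lra) ltac:(lra)) as Hxs.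
  pose proof (Hrho s h ltac:(lra) ltac:(lra) ltac:(lra)) as Hsh.
  pose proof (Hsig r (r + (t - h)) ltac:(lra) ltac:(lra) ltac:(lra)) as Hrq.
  rewrite rho0 in Hxs; rewrite rhoh in Hsh; fold q h in Hxq, Hrq.
  pose proof (mdist_tri _ x (rho s) q).
  pose proof (mdist_tri _ (sig r) (rho s) q).
  rewrite (mdist_sym _ (sig r) (rho s)) in *.
  lra.
Qed.

Lemma closest_point_near_morse {X : MetricSpace} N D (l sig : R -> X) d r u0 u1 :
  geodesic_space X -> morse N D l -> isometric_on 0 d sig ->
  closest_on 0 d sig (l u0) r -> D u0 -> D u1 -> sig d = l u1 ->
  exists u, D u /\ mdist (sig r) (l u) <= N 3 0.
Proof.
  intros GS [_ M] Hsig Hr Du0 Du1 Hend.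
  pose proof Hr as [[Hr0 Hrd] _].
  destruct (GS (l u0) (sig r)) as [rho [Grho [rho0 rhoh]]].
  assert (Hrho : isometric_on 0 (mdist (l u0) (sig r)) rho).
  { pose proof (mdist_nonneg _ (l u0) (sig r)).
    apply (geodesic_isometric_on _ _ _ _ Grho); cbn; lra. }
  pose proof (closest_point_detour_quasi_geodesic sig rho d r (l u0) Hsig Hr Hrho rho0 rhoh) as Q.
  set (h := mdist (l u0) (sig r)) in *.
  assert (Hh : 0 <= h) by apply mdist_nonneg.
  destruct (M 3 0 0 (h + (d - r)) _ ltac:(lra) ltac:(lra) Q) with (s := h) as [u [Du Hu]].
  - exists u0; split; [exact Du0|]; rewrite join_path_left by lra; exact rho0.
  - exists u1; split; [exact Du1|]; rewrite join_path_right by (auto; lra).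
    rewrite <- Hend; f_equal; ring.
  - lra.
  - exists u; split; [exact Du|]; rewrite join_path_left, rhoh in Hu by lra; exact Hu.
Qed.

Lemma geodesic_dist_from_start {X : MetricSpace} (D : R -> Prop) (l : R -> X) u :
  geodesic D l -> D 0 -> D u -> 0 <= u -> mdist (l 0) (l u) = u.
Proof. intros Gl D0 Du Hu; rewrite (geodesic_isometric_on D l 0 u) by (auto; lra); ring. Qed.

Section Divergence.

Variables (X : MetricSpace) (N : R -> R -> R) (D1 D2 : R -> Prop) (l1 l2 : R -> X)
  (e : X) (t0 : R).
Hypotheses (GS : geodesic_space X) (M1 : morse N D1 l1) (M2 : morse N D2 l2).
Hypotheses (D1_0 : D1 0) (D2_0 : D2 0)
  (D1_nonneg : forall t, D1 t -> 0 <= t) (D2_nonneg : forall t, D2 t -> 0 <= t).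
Hypotheses (l1_0 : l1 0 = e) (l2_0 : l2 0 = e).
Hypothesis far_apart : forall t, t0 <= t -> D1 t -> D2 t -> mdist (l1 t) (l2 t) > 4 * N 3 0.

Local Notation n := (N 3 0).

(* A point n-close to l1 u and to l2 v forces |u - v| <= 2n (compare distances to
   e), so u, v >= t0 would put l1 and l2 within 4n of each other at time min u v. *)
Lemma near_point_indices z u v :
  D1 u -> D2 v -> mdist z (l1 u) <= n -> mdist z (l2 v) <= n -> u + v < 2 * t0 + 2 * n.
Proof.
  intros Du Dv Hzu Hzv.
  destruct M1 as [G1 _]; destruct M2 as [G2 _].
  pose proof (D1_nonneg u Du); pose proof (D2_nonneg v Dv).
  pose proof (geodesic_dist_from_start D1 l1 u G1 D1_0 Du ltac:(lra)) as Hu.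
  pose proof (geodesic_dist_from_start D2 l2 v G2 D2_0 Dv ltac:(lra)) as Hv.
  rewrite l1_0 in Hu; rewrite l2_0 in Hv.
  assert (Huv : mdist (l1 u) (l2 v) <= 2 * n).
  { pose proof (mdist_tri _ (l1 u) z (l2 v)); rewrite mdist_sym in Hzu; lra. }
  assert (Hgap : Rabs (u - v) <= 2 * n).
  { pose proof (mdist_tri _ e (l1 u) (l2 v)); pose proof (mdist_tri _ e (l2 v) (l1 u)).
    rewrite (mdist_sym _ (l2 v)) in *; split_Rabs; lra. }
  destruct (Rle_dec u v).
  - destruct (Rlt_le_dec u t0) as [|Hu0]; [split_Rabs; lra|].
    assert (D2u : D2 u) by (apply (geodesic_domain_between D2 l2 0 v); auto; lra).
    pose proof (far_apart u Hu0 Du D2u).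
    pose proof (geodesic_dist D2 l2 v u G2 Dv D2u).
    pose proof (mdist_tri _ (l1 u) (l2 v) (l2 u)).
    split_Rabs; lra.
  - destruct (Rlt_le_dec v t0) as [|Hv0]; [split_Rabs; lra|].
    assert (D1v : D1 v) by (apply (geodesic_domain_between D1 l1 0 u); auto; lra).
    pose proof (far_apart v Hv0 D1v Dv).
    pose proof (geodesic_dist D1 l1 v u G1 D1v Du).
    pose proof (mdist_tri _ (l1 v) (l1 u) (l2 v)).
    split_Rabs; lra.
Qed.

Lemma morse_divergence a b :
  D1 a -> D2 b -> mdist (l1 a) (l2 b) > a + b - 2 * t0 - 4 * n.
Proof.
  intros Da Db.
  destruct (GS (l1 a) (l2 b)) as [gam [Ggam [gam0 gamd]]].
  set (d := mdist (l1 a) (l2 b)) in *.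
  assert (Hd : 0 <= d) by apply mdist_nonneg.
  assert (Hgam : isometric_on 0 d gam) by (apply (geodesic_isometric_on _ _ _ _ Ggam); cbn; lra).
  destruct (exists_closest_point 0 d gam e Hd (isometric_on_lipschitz1 _ _ _ Hgam))
    as [r Hr].
  pose proof Hr as [[Hr0 Hrd] _].
  destruct (closest_point_near_morse N D2 l2 gam d r 0 b GS M2 Hgam) as [v [Dv Hv]];
    [rewrite l2_0; exact Hr | auto | auto | auto |].
  destruct (closest_point_near_morse N D1 l1 (fun s => gam (d - s)) d (d - r) 0 a GS M1)
    as [u [Du Hu]];
    [apply isometric_on_reverse, Hgam | rewrite l1_0; apply closest_on_reverse, Hr
    | auto | auto | cbn; rewrite Rminus_diag; auto |].
  cbn in Hu; replace (d - (d - r)) with r in Hu by ring.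
  pose proof (near_point_indices (gam r) u v Du Dv Hu Hv).
  assert (Har : mdist (l1 a) (gam r) = r) by (rewrite <- gam0, Hgam by lra; ring).
  assert (Hrb : mdist (gam r) (l2 b) = d - r) by (rewrite <- gamd, Hgam by lra; ring).
  pose proof (geodesic_dist D1 l1 a u (proj1 M1) Da Du).
  pose proof (geodesic_dist D2 l2 v b (proj1 M2) Dv Db).
  pose proof (mdist_tri _ (l1 a) (gam r) (l1 u)).
  pose proof (mdist_tri _ (l2 v) (gam r) (l2 b)).
  rewrite (mdist_sym _ (l2 v) (gam r)) in *.
  split_Rabs; lra.
Qed.

End Divergence.

Section ThreePiecePath.

Variables (X : MetricSpace) (D1 D2 : R -> Prop) (l1 g l2 : R -> X) (t0 t1 t2 L B C : R).
Hypotheses (G1 : geodesic D1 l1) (G2 : geodesic D2 l2).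
Hypotheses (D1_t0 : D1 t0) (D1_t1 : D1 t1) (D2_t0 : D2 t0) (D2_t2 : D2 t2)
  (Ht1 : t0 <= t1) (Ht2 : t0 <= t2).
Hypotheses (Gg : geodesic (fun s => 0 <= s <= L) g) (g_0 : g 0 = l1 t0) (g_L : g L = l2 t0).
Hypothesis divergence :
  forall a b, t0 <= a <= t1 -> t0 <= b <= t2 -> a + b - 2 * t0 - C <= mdist (l1 a) (l2 b).
Hypotheses (HB_middle : 2 * L <= B) (HB_outer : L + C <= B).

Local Notation A := (t1 - t0).
Local Notation T := (t1 - t0 + L + (t2 - t0)).
Local Notation P := (concat_path l1 g l2 t0 t1 L).

Let L_nonneg : 0 <= L.
Proof. destruct Gg as [_ [[s Hs] _]]; lra. Qed.

Lemma concat_path_first s : s <= A -> P s = l1 (t1 - s).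
Proof. intros Hs; unfold concat_path; destruct Rle_dec; [reflexivity | lra]. Qed.

Lemma concat_path_middle s : A <= s <= A + L -> P s = g (s - A).
Proof.
  intros Hs; unfold concat_path; destruct (Rle_dec s A); [|destruct Rle_dec; [reflexivity | lra]].
  replace s with A by lra; rewrite Rminus_diag, g_0; f_equal; ring.
Qed.

Lemma concat_path_last s : A + L <= s -> P s = l2 (t0 + (s - A - L)).
Proof.
  intros Hs; unfold concat_path; destruct (Rle_dec s A); [|destruct Rle_dec; [|reflexivity]].
  - assert (L = 0) as L0 by lra.
    replace (t1 - s) with t0 by lra; replace (t0 + (s - A - L)) with t0 by lra.
    rewrite <- g_0, <- g_L, L0; reflexivity.
  - replace (s - A) with L by lra; rewrite g_L; f_equal; lra.
Qed.

Lemma concat_path_first_isometric : isometric_on 0 A P.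
Proof.
  intros s t Hs Hst Ht; rewrite !concat_path_first by lra.
  rewrite (geodesic_dist D1) by (auto; apply (geodesic_domain_between D1 l1 t0 t1); auto; lra); split_Rabs; lra.
Qed.

Lemma concat_path_middle_isometric : isometric_on A (A + L) P.
Proof.
  intros s t Hs Hst Ht; rewrite !concat_path_middle by lra.
  rewrite (geodesic_dist (fun s => 0 <= s <= L) g) by (auto; cbn; lra); split_Rabs; lra.
Qed.

Lemma concat_path_last_isometric : isometric_on (A + L) T P.
Proof.
  intros s t Hs Hst Ht; rewrite !concat_path_last by lra.
  rewrite (geodesic_dist D2) by (auto; apply (geodesic_domain_between D2 l2 t0 t2); auto; lra); split_Rabs; lra.
Qed.

Lemma concat_path_lipschitz1 : lipschitz1_on 0 T P.
Proof.
  apply (lipschitz1_on_glue _ (A + L)); [apply (lipschitz1_on_glue _ A)|];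
    apply isometric_on_lipschitz1;
    auto using concat_path_first_isometric, concat_path_middle_isometric,
      concat_path_last_isometric.
Qed.

Lemma concat_path_outer_lower s t :
  0 <= s <= A -> A + L <= t <= T -> t - s - B <= mdist (P s) (P t).
Proof.
  intros Hs Ht; rewrite concat_path_first, concat_path_last by lra.
  pose proof (divergence (t1 - s) (t0 + (t - A - L)) ltac:(lra) ltac:(lra)); lra.
Qed.

Lemma concat_path_lower s t :
  0 <= s -> s <= t -> t <= T -> t - s - B <= mdist (P s) (P t).
Proof.
  intros Hs Hst Ht.
  pose proof concat_path_first_isometric as I1.
  pose proof concat_path_middle_isometric as I2.
  pose proof concat_path_last_isometric as I3.
  pose proof (Rmin_l (A + L - s) (t - (A + L))); pose proof (Rmin_r (A - s) (t - A)).
  destruct (Rle_dec t A); [rewrite I1 by lra; lra|].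
  destruct (Rle_dec (A + L) s); [rewrite I3 by lra; lra|].
  destruct (Rle_dec s A), (Rle_dec t (A + L)).
  - pose proof (isometric_on_glue_lower 0 A (A + L) P s t I1 I2); lra.
  - apply concat_path_outer_lower; lra.
  - rewrite I2 by lra; lra.
  - pose proof (isometric_on_glue_lower A (A + L) T P s t I2 I3); lra.
Qed.

Lemma concat_path_quasi_geodesic : quasi_geodesic 1 B 0 T P.
Proof.
  apply quasi_geodesic_of_lipschitz1; [lra | lra | lra | exact concat_path_lipschitz1 |].
  intros s t Hs Hst Ht; rewrite Rinv_1, Rmult_1_l; apply concat_path_lower; assumption.
Qed.

End ThreePiecePath.

Theorem lemma3p4 (X : MetricSpace) (N : R -> R -> R)
  (D1 D2 : R -> Prop) (l1 l2 : R -> X) (e : X) (t0 t1 t2 : R) (g : R -> X) :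
  geodesic_space X ->
  morse_gauge N ->
  morse N D1 l1 -> morse N D2 l2 ->
  D1 0 -> D2 0 -> (forall t, D1 t -> 0 <= t) -> (forall t, D2 t -> 0 <= t) ->
  l1 0 = e -> l2 0 = e ->
  D1 t0 -> D2 t0 ->
  (forall t, t0 <= t -> D1 t -> D2 t -> mdist (l1 t) (l2 t) > 4 * N 3 0) ->
  mdist (l1 t0) (l2 t0) <= 6 * N 3 0 ->
  D1 t1 -> t0 <= t1 -> D2 t2 -> t0 <= t2 ->
  geodesic (fun s => 0 <= s <= mdist (l1 t0) (l2 t0)) g ->
  g 0 = l1 t0 -> g (mdist (l1 t0) (l2 t0)) = l2 t0 ->
  quasi_geodesic 1 (12 * N 3 0) 0 ((t1 - t0) + mdist (l1 t0) (l2 t0) + (t2 - t0))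
    (concat_path l1 g l2 t0 t1 (mdist (l1 t0) (l2 t0)))
  /\ mdist (l1 t1) (l2 t2) >=
       mdist (l1 t1) (l1 t0) + mdist (l1 t0) (l2 t0) + mdist (l2 t0) (l2 t2) - 12 * N 3 0.
Proof.
  intros GS MG M1 M2 D1_0 D2_0 D1_nonneg D2_nonneg l1_0 l2_0 D1_t0 D2_t0 far_apart
    Hclose D1_t1 Ht1 D2_t2 Ht2 Gg g_0 g_L.
  set (L := mdist (l1 t0) (l2 t0)) in *.
  assert (Hn : 0 <= N 3 0) by (apply MG; lra).
  pose proof (proj1 M1) as G1; pose proof (proj1 M2) as G2.
  assert (divergence : forall a b, t0 <= a <= t1 -> t0 <= b <= t2 ->
            a + b - 2 * t0 - 4 * N 3 0 <= mdist (l1 a) (l2 b)).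
  { intros a b Ha Hb; apply Rlt_le, (morse_divergence X N D1 D2 l1 l2 e t0); auto.
    - apply (geodesic_domain_between D1 l1 t0 t1); assumption.
    - apply (geodesic_domain_between D2 l2 t0 t2); assumption. }
  assert (Q : quasi_geodesic 1 (12 * N 3 0) 0 (t1 - t0 + L + (t2 - t0))
                (concat_path l1 g l2 t0 t1 L)).
  { apply (concat_path_quasi_geodesic X D1 D2 l1 g l2 t0 t1 t2 L _ (4 * N 3 0)); auto; lra. }
  split; [exact Q|].
  pose proof (quasi_geodesic1_endpoints _ _ _ _ Q) as Hends.
  rewrite (concat_path_first X l1 g l2 t0 t1 L), (concat_path_last X l1 g l2 t0 t1 L Gg g_0 g_L)
    in Hends by lra.
  replace (t1 - 0) with t1 in Hends by ring.
  replace (t0 + (t1 - t0 + L + (t2 - t0) - (t1 - t0) - L)) with t2 in Hends by ring.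
  rewrite (geodesic_dist D1 l1 t1 t0), (geodesic_dist D2 l2 t0 t2) by assumption.
  split_Rabs; lra.
Qed.
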